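(* Let $T>0$, $Q_T=(0,\infty)\times(0,T)$, and let $m,n\in L^\infty(Q_T)$ be two nonnegative solutions of the Kompaneets problem whose initial data satisfy $x^2m_0(x)\to0$, $x^2n_0(x)\to0$ as $x\to\infty$. For any $0<r<R<\infty$ and any $0<s<t\le T$, \begin{align*} &\int_r^R|n_t(x)-m_t(x)|\,dx+\int_s^t\operatorname{sign}(n_\tau(r)-m_\tau(r))\big(J(r,n_\tau)-J(r,m_\tau)\big)\,d\tau\\ &\le\int_r^R|n_s(x)-m_s(x)|\,dx+\int_s^t\operatorname{sign}(n_\tau(R)-m_\tau(R))\big(J(R,n_\tau)-J(R,m_\tau)\big)\,d\tau. \end{align*}
   Context: The Kompaneets problem: for $x>0$, $t>0$, $\partial_t n = \partial_x J$ with $J(x,n) = x^2\partial_x n + (x^2-2x)n + n^2$ (here $J(x,n_\tau)$ is evaluated at $x$ and time $\tau$), together with $\lim_{x\to\infty} J(x,n_t)=0$; no boundary condition at $x=0$. $n_t(x)=n(x,t)$. Solutions are nonnegative, $C^{2,1}$ for $x,t>0$ and continuous in time with values in $L^1$. *)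

From HB Require Import structures.
From mathcomp Require Import all_boot all_order all_algebra.
From mathcomp Require Import all_classical all_reals all_analysis.
Set Implicit Arguments. Unset Strict Implicit. Unset Printing Implicit Defensive.
Import Order.TTheory GRing.Theory Num.Theory.
Import numFieldNormedType.Exports.
Local Open Scope classical_set_scope.
Local Open Scope ring_scope.

Section Kompaneets.
Variable R : realType.
Implicit Types (n : R -> R -> R). (* n x t *)

Definition dx n (x t : R) : R := derive1 (fun y => n y t) x.
Definition dt n (x t : R) : R := derive1 (fun s => n x s) t.

Definition J n (x t : R) : R :=
  x ^+ 2 * dx n x t + (x ^+ 2 - 2 * x) * n x t + n x t ^+ 2.

Definition jcont (F : R -> R -> R) (x t : R) : Prop :=
  (fun p : R * R => F p.1 p.2) @ (x, t) --> F x t.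

Definition C21 n : Prop :=
  forall x t : R, 0 < x -> 0 < t ->
    [/\ derivable (fun y => n y t) x 1,
        derivable (fun y => dx n y t) x 1,
        derivable (fun s => n x s) t 1,
        (jcont n x t /\ jcont (dx n) x t) &
        (jcont (dx (dx n)) x t /\ jcont (dt n) x t)].

Definition L1_continuous n : Prop :=
  (forall t : R, 0 <= t ->
     (@lebesgue_measure R).-integrable [set x : R | (0 < x)%R] (fun x => (n x t)%:E)) /\
  (forall t0 : R, 0 <= t0 -> forall e : R, 0 < e -> exists2 d : R, 0 < d &
     forall t : R, 0 <= t -> `|t - t0| < d ->
       (\int[@lebesgue_measure R]_(x in [set x : R | (0 < x)%R]) (`|n x t - n x t0|)%:E
         < e%:E)%E).

Definition kompaneets_solution (n0 : R -> R) n : Prop :=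
  [/\ forall x t : R, 0 < x -> 0 <= t -> 0 <= n x t,
      C21 n,
      L1_continuous n,
      forall x : R, 0 < x -> n x 0 = n0 x &
      ((forall x t : R, 0 < x -> 0 < t ->
        dt n x t = derive1 (fun y => J n y t) x) /\
      (forall t : R, 0 < t -> J n x t @[x --> +oo] --> 0))].

Definition Linfty_QT (T : R) n : Prop :=
  exists M : R, forall x t : R, 0 < x -> 0 < t < T -> `|n x t| <= M.

End Kompaneets.

From HB Require Import structures.
From mathcomp Require Import all_boot all_order all_algebra.
From mathcomp Require Import all_classical all_reals all_analysis.
From mathcomp Require Import ring lra.
Import Order.TTheory GRing.Theory Num.Theory.
Import numFieldNormedType.Exports.
Local Open Scope classical_set_scope.
Local Open Scope ring_scope.

(** Kato's inequality for [w = n - m], made rigorous by smoothing the absolute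
    value to [sabs e w = sqrt (w^2 + e^2)].  By the equation,
    [d/dt \int_r^R sabs e w = \int_r^R ssg e w * d_x (J n - J m)] with
    [ssg e = (sabs e)'].  Integrating by parts in [x] and writing
    [J n - J m = x^2 w_x + b w] with [b = x^2 - 2x + n + m], the interior term is
    [- \int dssg e w * (x^2 w_x^2 + b w w_x)]: its first part is nonpositive, and
    since [dssg e w * w * w_x = - d_x (sabs_gap e w)] with [0 <= sabs_gap e <= e],
    a second integration by parts makes the second part [O(e)].  Integrating in
    time and letting [e -> 0] (dominated convergence, [ssg e -> sg]) gives the
    inequality. *)

Set Implicit Arguments. Unset Strict Implicit. Unset Printing Implicit Defensive.

Section smooth_abs.
Variable R : realType.
Implicit Types e v : R.

Lemma is_derive_continuous (f : R -> R) (x df : R) :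
  is_derive x 1 f df -> {for x, continuous f}.
Proof. by case=> hf _; apply: differentiable_continuous; exact/derivable1_diffP. Qed.

Definition sabs e v := Num.sqrt (v ^+ 2 + e ^+ 2).
Definition ssg e v := v / sabs e v.
Definition dssg e v := e ^+ 2 / sabs e v ^+ 3.
(* [sabs_gap e v = sabs e v - v * ssg e v] *)
Definition sabs_gap e v := e ^+ 2 / sabs e v.

Lemma sabs_gt0 e v : 0 < e -> 0 < sabs e v.
Proof. by move=> e0; rewrite sqrtr_gt0 ltr_wpDl ?sqr_ge0 ?exprn_gt0. Qed.

Lemma sabs_neq0 e v : 0 < e -> sabs e v != 0.
Proof. by move=> e0; rewrite gt_eqF ?sabs_gt0. Qed.

Lemma sqr_sabs e v : sabs e v ^+ 2 = v ^+ 2 + e ^+ 2.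
Proof. by rewrite sqr_sqrtr // addr_ge0 ?sqr_ge0. Qed.

Lemma is_derive_sabs e v : 0 < e -> is_derive v 1 (sabs e) (ssg e v).
Proof.
move=> e0.
have dsq : is_derive v 1 (fun y : R => y ^+ 2 + e ^+ 2) (2 * v).
  by apply: is_derive_eq; rewrite /GRing.scale /=; ring.
have dsqrt := is_derive1_sqrt (ltr_wpDl (sqr_ge0 v) (exprn_gt0 2 e0)).
rewrite (_ : sabs e = Num.sqrt \o (fun y => y ^+ 2 + e ^+ 2)) //.
apply: (is_derive_eq (@is_derive1_comp _ _ (fun y => y ^+ 2 + e ^+ 2) v _ _ dsqrt dsq)).
by rewrite /ssg /sabs; field; rewrite -/(sabs e v) sabs_neq0.
Qed.

Lemma is_derive_ssg e v : 0 < e -> is_derive v 1 (ssg e) (dssg e v).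
Proof.
move=> e0.
have dinv := is_deriveV (sabs_neq0 v e0) (is_derive_sabs v e0).
apply: (is_derive_eq (is_deriveM (@is_derive_id _ _ v 1) dinv)).
rewrite /dssg /ssg /GRing.scale /=.
have -> : e ^+ 2 = sabs e v ^+ 2 - v ^+ 2 by rewrite sqr_sabs; ring.
by field; rewrite sabs_neq0.
Qed.

Lemma is_derive_sabs_gap e v : 0 < e ->
  is_derive v 1 (sabs_gap e) (- (dssg e v * v)).
Proof.
move=> e0.
have dinv := is_deriveV (sabs_neq0 v e0) (is_derive_sabs v e0).
apply: (is_derive_eq (is_deriveZ (e ^+ 2) dinv)).
by rewrite /dssg /ssg /GRing.scale /=; field; rewrite sabs_neq0.
Qed.

Lemma abs_le_sabs e v : `|v| <= sabs e v.
Proof. by rewrite -(sqrtr_sqr v) ler_wsqrtr // lerDl sqr_ge0. Qed.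

Lemma sabs_le_abs_add e v : 0 <= e -> sabs e v <= `|v| + e.
Proof.
move=> e0; rewrite -(@ger0_norm _ (`|v| + e)) ?addr_ge0 // -sqrtr_sqr.
rewrite ler_wsqrtr // sqrrD real_normK ?num_real // -addrA lerD2l lerDr.
by rewrite mulrn_wge0 // mulr_ge0.
Qed.

Lemma abs_ssg_le1 e v : 0 < e -> `|ssg e v| <= 1.
Proof.
move=> e0; rewrite /ssg normrM normfV (gtr0_norm (sabs_gt0 v e0)).
by rewrite ler_pdivrMr ?sabs_gt0 // mul1r abs_le_sabs.
Qed.

Lemma dssg_ge0 e v : 0 < e -> 0 <= dssg e v.
Proof. by move=> e0; rewrite divr_ge0 ?sqr_ge0 ?exprn_ge0 ?ltW ?sabs_gt0. Qed.

Lemma sabs_gap_ge0 e v : 0 < e -> 0 <= sabs_gap e v.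
Proof. by move=> e0; rewrite divr_ge0 ?sqr_ge0 ?ltW ?sabs_gt0. Qed.

Lemma sabs_gap_le e v : 0 < e -> sabs_gap e v <= e.
Proof.
move=> e0; rewrite ler_pdivrMr ?sabs_gt0 // expr2 ler_pM2l //.
by rewrite -[leLHS](gtr0_norm e0) -sqrtr_sqr ler_wsqrtr // lerDr sqr_ge0.
Qed.

Lemma continuous_dssg e v : 0 < e -> {for v, continuous (dssg e)}.
Proof.
move=> e0; apply: cvgM; first exact: cvg_cst.
apply: cvgV; first by rewrite expf_eq0 (negbTE (sabs_neq0 v e0)) andbF.
have csabs := is_derive_continuous (is_derive_sabs v e0).
by rewrite /= !exprS expr0 !mulr1; apply: cvgM => //; apply: cvgM.
Qed.

Lemma cvg_ssg_sg (e_ : nat -> R) v :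
  e_ @ \oo --> 0 -> (fun k => ssg (e_ k) v) @ \oo --> Num.sg v.
Proof.
move=> e_0; have [->|v0] := eqVneq v 0.
  by rewrite sgr0 /ssg; under eq_fun do rewrite mul0r; exact: cvg_cst.
have sabs_v : (fun k => sabs (e_ k) v) @ \oo --> `|v|.
  rewrite /sabs -sqrtr_sqr; apply: continuous_cvg; first exact: sqrt_continuous.
  rewrite -[X in _ --> X]addr0 -[0 in X in _ --> X](mulr0 0).
  by apply: cvgD; [exact: cvg_cst | exact: cvgM].
have -> : Num.sg v = v / `|v| by rewrite -{2}(mulr_sg_norm v) mulfK ?normr_eq0.
by apply: cvgM; [exact: cvg_cst | apply: cvgV; rewrite ?normr_eq0].
Qed.

End smooth_abs.

Section joint_continuity.
Variable R : realType.
Implicit Types (F G : R -> R -> R) (x t : R).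

Lemma jcont_continuous_x F x t : jcont F x t -> {for x, continuous (F^~ t)}.
Proof.
move=> h; exact: (cvg_comp _ _
  (@cvg_pair _ _ _ _ _ _ _ _ _ (fun y : R => y) (fun=> t) cvg_id (cvg_cst t)) h).
Qed.

Lemma jcont_continuous_t F x t : jcont F x t -> {for t, continuous (F x)}.
Proof.
move=> h; exact: (cvg_comp _ _
  (@cvg_pair _ _ _ _ _ _ _ _ _ (fun=> x) (fun y : R => y) (cvg_cst x) cvg_id) h).
Qed.

Lemma jcontD F G x t : jcont F x t -> jcont G x t ->
  jcont (fun a b => F a b + G a b) x t.
Proof. exact: cvgD. Qed.

Lemma jcontB F G x t : jcont F x t -> jcont G x t ->
  jcont (fun a b => F a b - G a b) x t.
Proof. exact: cvgB. Qed.

Lemma jcontM F G x t : jcont F x t -> jcont G x t ->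
  jcont (fun a b => F a b * G a b) x t.
Proof. exact: cvgM. Qed.

Lemma jcont_cst (c x t : R) : jcont (fun _ _ => c) x t.
Proof. exact: cvg_cst. Qed.

Lemma jcont_fst x t : jcont (fun a _ => a) x t.
Proof. exact: cvg_fst. Qed.

Lemma jcont_bounded F a b c d :
  (forall x t, a <= x <= b -> c <= t <= d -> jcont F x t) ->
  exists M, forall x t, a <= x <= b -> c <= t <= d -> `|F x t| <= M.
Proof.
move=> hF.
have cA : compact (`[a, b] `*` `[c, d] : set (R * R)).
  by apply: compact_setX; exact: segment_compact.
have cF : {within `[a, b] `*` `[c, d], continuous (fun p : R * R => F p.1 p.2)}.
  apply: continuous_in_subspaceT => -[x t] /set_mem [/= hx ht].
  by apply: hF; [move: hx | move: ht]; rewrite in_itv.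
have /compact_bounded[M [_ HM]] := continuous_compact cF cA.
exists (M + 1) => x t hx ht; apply: (HM (M + 1)); first by rewrite ltrDl.
by exists (x, t) => //; split; rewrite /= in_itv.
Qed.

End joint_continuity.

Section segment_integral.
Variable R : realType.
Notation mu := (@lebesgue_measure R).

Lemma EFin_Rintegral (D : set R) (f : R -> R) : measurable D ->
  mu.-integrable D (EFin \o f) ->
  (\int[mu]_(x in D) (f x)%:E)%E = (\int[mu]_(x in D) f x)%:E.
Proof. by move=> mD intf; rewrite /Rintegral fineK // integrable_fin_num. Qed.

Implicit Types (f g : R -> R) (a b : R).

Lemma integrable_segment f a b :
  (forall x, a <= x <= b -> {for x, continuous f}) ->
  mu.-integrable `[a, b] (EFin \o f).
Proof.
move=> hf; apply: continuous_compact_integrable; first exact: segment_compact.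
by apply: continuous_in_subspaceT => x /set_mem; rewrite /= in_itv => /hf.
Qed.

Lemma Rintegral_segment_derive (F f : R -> R) a b : a < b ->
  (forall x, a <= x <= b -> is_derive x 1 F (f x)) ->
  (forall x, a <= x <= b -> {for x, continuous f}) ->
  \int[mu]_(x in `[a, b]) f x = F b - F a.
Proof.
move=> ab dF cf.
have aab : a <= a <= b by rewrite lexx ltW.
have abb : a <= b <= b by rewrite lexx ltW.
rewrite /Rintegral (@continuous_FTC2 _ f F a b ab) //.
- by apply: continuous_in_subspaceT => x /set_mem; rewrite /= in_itv => /cf.
- split.
  + by move=> x; rewrite in_itv => /andP[xa xb]; case: (dF x); rewrite ?ltW.
  + exact/cvg_at_right_filter/(is_derive_continuous (dF a aab)).
  + exact/cvg_at_left_filter/(is_derive_continuous (dF b abb)).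
- move=> x; rewrite in_itv => /andP[xa xb].
  by rewrite derive1E (@derive_val _ _ _ _ _ _ _ (dF x _)) // !ltW.
Qed.

Lemma le_Rintegral_segment f g a b :
  (forall x, a <= x <= b -> {for x, continuous f}) ->
  (forall x, a <= x <= b -> {for x, continuous g}) ->
  (forall x, a <= x <= b -> f x <= g x) ->
  \int[mu]_(x in `[a, b]) f x <= \int[mu]_(x in `[a, b]) g x.
Proof. by move=> cf cg fg; apply: le_Rintegral => //; exact: integrable_segment. Qed.

Lemma RintegralD_segment f g a b :
  (forall x, a <= x <= b -> {for x, continuous f}) ->
  (forall x, a <= x <= b -> {for x, continuous g}) ->
  \int[mu]_(x in `[a, b]) (f x + g x) =
  \int[mu]_(x in `[a, b]) f x + \int[mu]_(x in `[a, b]) g x.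
Proof. by move=> cf cg; apply: RintegralD => //; exact: integrable_segment. Qed.

Lemma Rintegral_segment_cst (c a b : R) : a <= b ->
  \int[mu]_(x in `[a, b]) c = c * (b - a).
Proof.
move=> ab; rewrite Rintegral_cst //.
have := lebesgue_measure_itv `[a, b]; rewrite /= => ->.
case: ifPn => [_|]; first by rewrite -EFinB.
by rewrite lte_fin -leNgt => ba; rewrite (@le_anti _ _ a b) ?ab // subrr mulr0.
Qed.

Lemma sub_le_Rintegral_derive (F dF f : R -> R) a b : a < b ->
  {within `[a, b], continuous F} ->
  (forall x, a < x < b -> is_derive x 1 F (dF x)) ->
  (forall x, a < x < b -> dF x <= f x) ->
  (forall x, a <= x <= b -> {for x, continuous f}) ->
  F b - F a <= \int[mu]_(x in `[a, b]) f x.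
Proof.
move=> ab cF dF_ dF_le cf.
have intf := integrable_segment cf.
pose g x := F x - \int[mu]_(y in `[a, x]) f y.
have dg x : a < x < b -> is_derive x 1 g (dF x - f x).
  move=> /[dup] axb /andP[ax xb].
  have cfx : {for x, continuous f} by apply: cf; rewrite !ltW.
  have [dG vG] := continuous_FTC1_closed xb intf ax cfx.
  apply: is_deriveB; first exact: dF_.
  by apply: DeriveDef; [exact: dG | rewrite -derive1E vG].
have g_derivable x : x \in `]a, b[ -> derivable g x 1.
  by rewrite in_itv => /dg [].
have g'_le0 x : x \in `]a, b[ -> derive1 g x <= 0.
  rewrite in_itv => /[dup] /dg dgx /dF_le.
  by rewrite derive1E (@derive_val _ _ _ _ _ _ _ dgx) subr_le0.
have cg : {within `[a, b], continuous g}.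
  move=> x; apply: cvgB; first exact: cF.
  exact: parameterized_integral_continuous (ltW ab) intf x.
have a_in : a \in `[a, b] by rewrite in_itv /= lexx ltW.
have b_in : b \in `[a, b] by rewrite in_itv /= lexx ltW.
have := ler0_derive1_le_cc g_derivable g'_le0 cg b_in a_in (ltW ab).
by rewrite /g set_itv1 Rintegral_set1 subr0 lerBlDr -lerBlDl.
Qed.

Lemma is_derive_Rintegral (f df : R -> R -> R) (a b u v t M : R) : u < t < v ->
  (forall s, u < s < v -> mu.-integrable `[a, b] (EFin \o f s)) ->
  (forall s x, u < s < v -> a <= x <= b -> is_derive s 1 (f ^~ x) (df s x)) ->
  (forall s x, u < s < v -> a <= x <= b -> `|df s x| <= M) ->
  is_derive t 1 (fun s => \int[mu]_(x in `[a, b]) f s x)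
    (\int[mu]_(x in `[a, b]) df t x).
Proof.
move=> t_in intf df_ df_le.
have mB : measurable (`[a, b] : set R) by [].
have tI : `]u, v[%classic t by rewrite /= in_itv.
have intfI s : `]u, v[%classic s -> mu.-integrable `[a, b] (EFin \o f s).
  by rewrite /= in_itv => /intf.
have derf s x : `]u, v[%classic s -> `[a, b]%classic x -> derivable (f ^~ x) s 1.
  by rewrite /= !in_itv => s_in x_in; case: (df_ s x s_in x_in).
have G_ge0 (x : R) : 0 <= (fun=> `|M|) x by [].
have intG : mu.-integrable `[a, b] (EFin \o (fun=> `|M|)).
  by apply: integrable_segment => x _; exact: cvg_cst.
have G_ub s x : `]u, v[%classic s -> `[a, b]%classic x -> `|partial1of2 f s x| <= `|M|.
  rewrite /= !in_itv => s_in x_in; rewrite /partial1of2 derive1E.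
  rewrite (@derive_val _ _ _ _ _ _ _ (df_ s x s_in x_in)).
  exact: le_trans (df_le s x s_in x_in) (ler_norm M).
have D1 := @derivable_under_integral R _ _ mu f _ mB t u v tI intfI derf _ G_ge0 intG G_ub.
have D2 :=
  @differentiation_under_integral R _ _ mu f _ mB t u v tI intfI derf _ G_ge0 intG G_ub.
 apply: DeriveDef; first exact: D1.
rewrite -derive1E D2; apply: eq_Rintegral => x; rewrite inE /= in_itv => x_in.
by rewrite /partial1of2 derive1E (@derive_val _ _ _ _ _ _ _ (df_ t x t_in x_in)).
Qed.

End segment_integral.

Section solution_regularity.
Variable R : realType.
Variable u : R -> R -> R.
Hypothesis u_C21 : C21 u.
Hypothesis u_eq : forall x t : R, 0 < x -> 0 < t -> dt u x t = derive1 (J u ^~ t) x.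
Implicit Types x t : R.

Lemma is_derive_sol_x x t : 0 < x -> 0 < t -> is_derive x 1 (u ^~ t) (dx u x t).
Proof.
move=> x0 t0; have [du _ _ _ _] := u_C21 x0 t0.
by rewrite /dx derive1E; exact: derivableP.
Qed.

Lemma is_derive_dx_x x t : 0 < x -> 0 < t ->
  is_derive x 1 (dx u ^~ t) (dx (dx u) x t).
Proof.
move=> x0 t0; have [_ ddu _ _ _] := u_C21 x0 t0.
by rewrite [X in is_derive _ _ _ X]/dx derive1E; exact: derivableP.
Qed.

Lemma is_derive_sol_t x t : 0 < x -> 0 < t -> is_derive t 1 (u x) (dt u x t).
Proof.
move=> x0 t0; have [_ _ du _ _] := u_C21 x0 t0.
by rewrite /dt derive1E; exact: derivableP.
Qed.

Lemma jcont_sol x t : 0 < x -> 0 < t -> jcont u x t.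
Proof. by move=> x0 t0; have [_ _ _ [cu _] _] := u_C21 x0 t0. Qed.

Lemma jcont_dx x t : 0 < x -> 0 < t -> jcont (dx u) x t.
Proof. by move=> x0 t0; have [_ _ _ [_ cdx] _] := u_C21 x0 t0. Qed.

Lemma jcont_dt x t : 0 < x -> 0 < t -> jcont (dt u) x t.
Proof. by move=> x0 t0; have [_ _ _ _ [_ cdt]] := u_C21 x0 t0. Qed.

Lemma jcont_flux x t : 0 < x -> 0 < t -> jcont (J u) x t.
Proof.
move=> x0 t0; have cu := jcont_sol x0 t0.
have cx : jcont (fun a _ => a) x t by exact: jcont_fst.
have cx2 : jcont (fun a _ => a ^+ 2) x t by exact: jcontM.
apply: jcontD; first apply: jcontD.
- exact: jcontM cx2 (jcont_dx x0 t0).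
- by apply: jcontM => //; apply: jcontB => //; apply: jcontM => //; exact: jcont_cst.
- exact: jcontM.
Qed.

Lemma is_derive_flux_x x t : 0 < x -> 0 < t -> is_derive x 1 (J u ^~ t) (dt u x t).
Proof.
move=> x0 t0; have du := is_derive_sol_x x0 t0; have ddu := is_derive_dx_x x0 t0.
have dJ : derivable (J u ^~ t) x 1.
  rewrite (_ : J u ^~ t = (fun y => y ^+ 2) * (dx u ^~ t) +
      (fun y => y ^+ 2 - 2 * y) * (u ^~ t) + (u ^~ t) * (u ^~ t)); last first.
    by apply/funext => y; rewrite /J /= expr2.
  apply: derivableD; first apply: derivableD.
  - by apply: derivableM; [exact: exprn_derivable | exact: ex_derive].
  - apply: derivableM; last exact: ex_derive.
    apply: derivableB; first exact: exprn_derivable.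
    by apply: derivableM; [exact: derivable_cst | exact: derivable_id].
  - by apply: derivableM; exact: ex_derive.
by rewrite u_eq // derive1E; exact: derivableP.
Qed.

End solution_regularity.

Lemma kato_remainder_ge (R : realDomainType) (e P H B X y b v : R) :
  0 <= P -> 0 <= H -> H <= e ->
  - (e * `|B|) <= P * X * (y ^+ 2 * X + b * v) + B * H - b * (P * v * X).
Proof.
move=> P0 H0 He.
have q1 : 0 <= P * (y * X) ^+ 2 by rewrite mulr_ge0 ?sqr_ge0.
have q2 : 0 <= (`|B| + B) * H by rewrite mulr_ge0 // -lerBlDr sub0r -normrN ler_norm.
have q3 : `|B| * H <= e * `|B| by rewrite mulrC ler_wpM2r.
have -> : P * X * (y ^+ 2 * X + b * v) + B * H - b * (P * v * X) =
  P * (y * X) ^+ 2 + (`|B| + B) * H - `|B| * H by ring.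
lra.
Qed.

Section difference.
Variable R : realType.
Variables n m : R -> R -> R.
Hypotheses (n_C21 : C21 n) (m_C21 : C21 m).
Hypothesis n_eq : forall x t : R, 0 < x -> 0 < t -> dt n x t = derive1 (J n ^~ t) x.
Hypothesis m_eq : forall x t : R, 0 < x -> 0 < t -> dt m x t = derive1 (J m ^~ t) x.
Implicit Types x t : R.

Definition dif x t := n x t - m x t.
Definition dif_x x t := dx n x t - dx m x t.
Definition dif_t x t := dt n x t - dt m x t.
Definition dflux x t := J n x t - J m x t.
Definition flux_coef x t := x ^+ 2 - 2 * x + n x t + m x t.
Definition flux_coef_x x t := 2 * x - 2 + dx n x t + dx m x t.

Lemma dfluxE x t : dflux x t = x ^+ 2 * dif_x x t + flux_coef x t * dif x t.
Proof. by rewrite /dflux /J /dif_x /flux_coef /dif; ring. Qed.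

Lemma is_derive_dif_x x t : 0 < x -> 0 < t -> is_derive x 1 (dif ^~ t) (dif_x x t).
Proof. by move=> x0 t0; apply: is_deriveB; exact: is_derive_sol_x. Qed.

Lemma is_derive_dif_t x t : 0 < x -> 0 < t -> is_derive t 1 (dif x) (dif_t x t).
Proof. by move=> x0 t0; apply: is_deriveB; exact: is_derive_sol_t. Qed.

Lemma is_derive_dflux_x x t : 0 < x -> 0 < t -> is_derive x 1 (dflux ^~ t) (dif_t x t).
Proof. by move=> x0 t0; apply: is_deriveB; exact: is_derive_flux_x. Qed.

Lemma is_derive_flux_coef_x x t : 0 < x -> 0 < t ->
  is_derive x 1 (flux_coef ^~ t) (flux_coef_x x t).
Proof.
move=> x0 t0.
have dpoly : is_derive x 1 (fun y : R => y ^+ 2 - 2 * y) (2 * x - 2).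
  by apply: is_derive_eq; rewrite /GRing.scale /=; ring.
rewrite (_ : flux_coef ^~ t = (fun y => y ^+ 2 - 2 * y) + n ^~ t + m ^~ t); last first.
  by apply/funext => y; rewrite /flux_coef !fctE.
apply: (is_derive_eq (is_deriveD (is_deriveD dpoly (is_derive_sol_x n_C21 x0 t0))
  (is_derive_sol_x m_C21 x0 t0))).
by rewrite /flux_coef_x.
Qed.

Lemma jcont_dif x t : 0 < x -> 0 < t -> jcont dif x t.
Proof. by move=> x0 t0; apply: jcontB; exact: jcont_sol. Qed.

Lemma jcont_dif_x x t : 0 < x -> 0 < t -> jcont dif_x x t.
Proof. by move=> x0 t0; apply: jcontB; exact: jcont_dx. Qed.

Lemma jcont_dif_t x t : 0 < x -> 0 < t -> jcont dif_t x t.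
Proof. by move=> x0 t0; apply: jcontB; exact: jcont_dt. Qed.

Lemma jcont_dflux x t : 0 < x -> 0 < t -> jcont dflux x t.
Proof. by move=> x0 t0; apply: jcontB; exact: jcont_flux. Qed.

Lemma jcont_flux_coef x t : 0 < x -> 0 < t -> jcont flux_coef x t.
Proof.
move=> x0 t0; have cx : jcont (fun a _ => a) x t by exact: jcont_fst.
apply: jcontD; last exact: jcont_sol.
apply: jcontD; last exact: jcont_sol.
by apply: jcontB; [exact: jcontM | apply: jcontM => //; exact: jcont_cst].
Qed.

Lemma jcont_flux_coef_x x t : 0 < x -> 0 < t -> jcont flux_coef_x x t.
Proof.
move=> x0 t0; have cx : jcont (fun a _ => a) x t by exact: jcont_fst.
apply: jcontD; last exact: jcont_dx.
apply: jcontD; last exact: jcont_dx.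
by apply: jcontB; [apply: jcontM => //; exact: jcont_cst | exact: jcont_cst].
Qed.

Notation mu := (@lebesgue_measure R).
Implicit Type e : R.

Definition ssg_flux e x t := ssg e (dif x t) * dflux x t.
Definition kato_flux e t x := ssg_flux e x t + flux_coef x t * sabs_gap e (dif x t).
Definition kato_rem e x t := dssg e (dif x t) * dif_x x t * dflux x t
  + flux_coef_x x t * sabs_gap e (dif x t)
  - flux_coef x t * (dssg e (dif x t) * dif x t * dif_x x t).

Lemma kato_rem_ge e x t : 0 < e -> - (e * `|flux_coef_x x t|) <= kato_rem e x t.
Proof.
move=> e0; rewrite /kato_rem dfluxE.
by apply: kato_remainder_ge; [exact: dssg_ge0 | exact: sabs_gap_ge0 | exact: sabs_gap_le].
Qed.

Section fixed_time.
Variables (e t : R).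
Hypotheses (e0 : 0 < e) (t0 : 0 < t).

Lemma is_derive_ssg_dif_x x : 0 < x ->
  is_derive x 1 (fun y => ssg e (dif y t)) (dssg e (dif x t) * dif_x x t).
Proof.
move=> x0; exact: (@is_derive1_comp _ _ (dif ^~ t) x _ _
  (is_derive_ssg _ e0) (is_derive_dif_x x0 t0)).
Qed.

Lemma is_derive_sabs_gap_dif_x x : 0 < x ->
  is_derive x 1 (fun y => sabs_gap e (dif y t))
    (- (dssg e (dif x t) * dif x t) * dif_x x t).
Proof.
move=> x0; exact: (@is_derive1_comp _ _ (dif ^~ t) x _ _
  (is_derive_sabs_gap _ e0) (is_derive_dif_x x0 t0)).
Qed.

Lemma is_derive_kato_flux x : 0 < x ->
  is_derive x 1 (kato_flux e t) (ssg e (dif x t) * dif_t x t + kato_rem e x t).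
Proof.
move=> x0.
rewrite (_ : kato_flux e t = (fun y => ssg e (dif y t)) * (dflux ^~ t) +
  (flux_coef ^~ t) * (fun y => sabs_gap e (dif y t))); last first.
  by apply/funext => y; rewrite /kato_flux /ssg_flux !fctE.
apply: (is_derive_eq (is_deriveD
  (is_deriveM (is_derive_ssg_dif_x x0) (is_derive_dflux_x x0 t0))
  (is_deriveM (is_derive_flux_coef_x x0 t0) (is_derive_sabs_gap_dif_x x0)))).
by rewrite /kato_rem /GRing.scale /=; ring.
Qed.

Lemma continuous_kato_integrand x : 0 < x ->
  {for x, continuous (fun y => ssg e (dif y t) * dif_t y t + kato_rem e y t)}.
Proof.
move=> x0.
have cdif := jcont_continuous_x (jcont_dif x0 t0).
have cdif_x := jcont_continuous_x (jcont_dif_x x0 t0).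
have cdif_t := jcont_continuous_x (jcont_dif_t x0 t0).
have cdflux := jcont_continuous_x (jcont_dflux x0 t0).
have cb := jcont_continuous_x (jcont_flux_coef x0 t0).
have cb_x := jcont_continuous_x (jcont_flux_coef_x x0 t0).
have cssg := is_derive_continuous (is_derive_ssg_dif_x x0).
have cgap := is_derive_continuous (is_derive_sabs_gap_dif_x x0).
have cdssg : {for x, continuous (fun y => dssg e (dif y t))}.
  by move: (continuous_comp cdif (@continuous_dssg _ e (dif x t) e0)).
have crem1 : {for x, continuous (fun y => dssg e (dif y t) * dif_x y t * dflux y t)}.
  exact: cvgM (cvgM cdssg cdif_x) cdflux.
have crem2 : {for x, continuous (fun y => flux_coef_x y t * sabs_gap e (dif y t))}.
  exact: cvgM.
have crem3 : {for x, continuous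
    (fun y => flux_coef y t * (dssg e (dif y t) * dif y t * dif_x y t))}.
  exact: cvgM cb (cvgM (cvgM cdssg cdif) cdif_x).
by apply: cvgD; [exact: cvgM | apply: cvgB; [exact: cvgD | exact: crem3]].
Qed.

Lemma Rintegral_ssg_dif_t_le r Rr Mb Mbx : 0 < r -> r < Rr ->
  (forall x, r <= x <= Rr -> `|flux_coef_x x t| <= Mbx) ->
  `|flux_coef r t| <= Mb -> `|flux_coef Rr t| <= Mb ->
  \int[mu]_(x in `[r, Rr]) (ssg e (dif x t) * dif_t x t) <=
  ssg_flux e Rr t - ssg_flux e r t + e * (2 * Mb + (Rr - r) * Mbx).
Proof.
move=> r0 rR bx_le br_le bR_le.
have pos x : r <= x <= Rr -> 0 < x by case/andP => /(lt_le_trans r0).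
have cbx x : r <= x <= Rr -> {for x, continuous (fun y => e * `|flux_coef_x y t|)}.
  move=> /pos x0; apply: cvgM; first exact: cvg_cst.
  exact: (continuous_comp (jcont_continuous_x (jcont_flux_coef_x x0 t0))
                          (@norm_continuous _ R^o _)).
have ckato x : r <= x <= Rr ->
    {for x, continuous (fun y => ssg e (dif y t) * dif_t y t + kato_rem e y t)}.
  by move=> /pos; exact: continuous_kato_integrand.
have kato_le : \int[mu]_(x in `[r, Rr]) (ssg e (dif x t) * dif_t x t) <=
    \int[mu]_(x in `[r, Rr]) (ssg e (dif x t) * dif_t x t + kato_rem e x t
                              + e * `|flux_coef_x x t|).
  apply: le_Rintegral_segment => [x /pos x0|x hx|x _].
  - by apply: cvgM; [exact: is_derive_continuous (is_derive_ssg_dif_x x0) |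
                     exact: jcont_continuous_x (jcont_dif_t x0 t0)].
  - by apply: cvgD; [exact: ckato | exact: cbx].
  - by have := kato_rem_ge x t e0; lra.
have dkato x : r <= x <= Rr -> is_derive x 1 (kato_flux e t)
    (ssg e (dif x t) * dif_t x t + kato_rem e x t).
  by move=> /pos; exact: is_derive_kato_flux.
rewrite RintegralD_segment // (Rintegral_segment_derive rR dkato ckato) in kato_le.
have bx_int : \int[mu]_(x in `[r, Rr]) (e * `|flux_coef_x x t|) <= e * Mbx * (Rr - r).
  rewrite -Rintegral_segment_cst; last exact: ltW.
  apply: le_Rintegral_segment => [//|x _|x hx]; first exact: cvg_cst.
  by rewrite ler_pM2l // bx_le.
have gap_le y : `|flux_coef y t| <= Mb ->
    `|flux_coef y t * sabs_gap e (dif y t)| <= Mb * e.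
  move=> b_le; rewrite normrM ler_pM // ger0_norm ?sabs_gap_ge0 ?sabs_gap_le //.
move: (gap_le _ br_le) (gap_le _ bR_le) => /ler_normlP[? ?] /ler_normlP[? ?].
rewrite /kato_flux in kato_le; lra.
Qed.

End fixed_time.

Lemma continuous_ssg_flux_t e x t : 0 < e -> 0 < x -> 0 < t ->
  {for t, continuous (ssg_flux e x)}.
Proof.
move=> e0 x0 t0; apply: cvgM; last exact: jcont_continuous_t (jcont_dflux x0 t0).
by move: (continuous_comp (jcont_continuous_t (jcont_dif x0 t0))
                          (is_derive_continuous (is_derive_ssg (dif x t) e0))).
Qed.

Lemma continuous_abs_dif_x x t : 0 < x -> 0 < t ->
  {for x, continuous (fun y => `|dif y t|)}.
Proof.
move=> x0 t0.
exact: continuous_comp (jcont_continuous_x (jcont_dif x0 t0)) (@norm_continuous _ R^o _).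
Qed.

Lemma continuous_sabs_dif_x e x t : 0 < e -> 0 < x -> 0 < t ->
  {for x, continuous (fun y => sabs e (dif y t))}.
Proof.
move=> e0 x0 t0; exact: continuous_comp (jcont_continuous_x (jcont_dif x0 t0))
  (is_derive_continuous (is_derive_sabs _ e0)).
Qed.

Lemma is_derive_Rintegral_sabs_dif e r Rr t : 0 < e -> 0 < r -> 0 < t ->
  is_derive t 1 (fun s => \int[mu]_(x in `[r, Rr]) sabs e (dif x s))
    (\int[mu]_(x in `[r, Rr]) (ssg e (dif x t) * dif_t x t)).
Proof.
move=> e0 r0 t0.
have t2_gt0 : 0 < t / 2 by rewrite divr_gt0.
have t_in : t / 2 < t < t + 1.
  by rewrite ltrDl ltr01 andbT ltr_pdivrMr // ltr_pMr // ltr1n.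
have posx x : r <= x <= Rr -> 0 < x by case/andP => /(lt_le_trans r0).
have poss s : t / 2 <= s <= t + 1 -> 0 < s by case/andP => /(lt_le_trans t2_gt0).
have [M M_ub] : exists M : R, forall x s, r <= x <= Rr -> t / 2 <= s <= t + 1 ->
    `|dif_t x s| <= M.
  by apply: jcont_bounded => x s /posx x0 /poss s0; exact: jcont_dif_t.
have closeW s : t / 2 < s < t + 1 -> t / 2 <= s <= t + 1.
  by case/andP => t2s st1; rewrite !ltW.
apply: (is_derive_Rintegral (f := fun s x => sabs e (dif x s))
  (df := fun s x => ssg e (dif x s) * dif_t x s) (M := M) t_in)
  => [s /closeW /poss s0 | s x /closeW /poss s0 /posx x0 | s x /closeW s_in x_in].
- by apply: integrable_segment => x /posx x0; exact: continuous_sabs_dif_x.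
- exact: (@is_derive1_comp _ _ (dif x) s _ _
    (is_derive_sabs _ e0) (is_derive_dif_t x0 s0)).
- by rewrite normrM -(mul1r M) ler_pM ?abs_ssg_le1 ?M_ub.
Qed.

Lemma Rintegral_sabs_dif_le e r Rr s t Mb Mbx :
  0 < e -> 0 < r -> r < Rr -> 0 < s -> s < t ->
  (forall x y, r <= x <= Rr -> s <= y <= t -> `|flux_coef_x x y| <= Mbx) ->
  (forall x y, r <= x <= Rr -> s <= y <= t -> `|flux_coef x y| <= Mb) ->
  \int[mu]_(x in `[r, Rr]) sabs e (dif x t) - \int[mu]_(x in `[r, Rr]) sabs e (dif x s) <=
  \int[mu]_(y in `[s, t]) (ssg_flux e Rr y - ssg_flux e r y
                           + e * (2 * Mb + (Rr - r) * Mbx)).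
Proof.
move=> e0 r0 rR s0 st bx_le b_le.
have pos y : s <= y <= t -> 0 < y by case/andP => /(lt_le_trans s0).
have rRr : r <= r <= Rr by rewrite lexx ltW.
have rRR : r <= Rr <= Rr by rewrite lexx ltW.
apply: (sub_le_Rintegral_derive
  (F := fun y => \int[mu]_(x in `[r, Rr]) sabs e (dif x y))
  (dF := fun y => \int[mu]_(x in `[r, Rr]) (ssg e (dif x y) * dif_t x y)) st)
  => [|y /andP[sy yt]|y /andP[sy yt]|y /pos y0].
- apply: continuous_in_subspaceT => y /set_mem; rewrite /= in_itv => /pos y0.
  exact: is_derive_continuous (is_derive_Rintegral_sabs_dif Rr e0 r0 y0).
- exact: is_derive_Rintegral_sabs_dif (lt_trans s0 sy).
- have syt : s <= y <= t by rewrite !ltW.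
  apply: Rintegral_ssg_dif_t_le => //; first exact: lt_trans s0 sy.
  + by move=> x rxR; exact: bx_le.
  + exact: b_le rRr syt.
  + exact: b_le rRR syt.
- apply: cvgD; last exact: cvg_cst.
  by apply: cvgB; apply: continuous_ssg_flux_t => //; exact: lt_trans rR.
Qed.

Lemma Rintegral_sabs_dif_bounds e r Rr t : 0 < e -> 0 < r -> r <= Rr -> 0 < t ->
  \int[mu]_(x in `[r, Rr]) `|dif x t| <= \int[mu]_(x in `[r, Rr]) sabs e (dif x t) <=
  \int[mu]_(x in `[r, Rr]) `|dif x t| + e * (Rr - r).
Proof.
move=> e0 r0 rRr t0.
have posx x : r <= x <= Rr -> 0 < x by case/andP => /(lt_le_trans r0).
have cabs x : r <= x <= Rr -> {for x, continuous (fun y => `|dif y t|)}.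
  by move/posx => x0; exact: continuous_abs_dif_x.
have csabs x : r <= x <= Rr -> {for x, continuous (fun y => sabs e (dif y t))}.
  by move/posx => x0; exact: continuous_sabs_dif_x.
apply/andP; split.
  by apply: le_Rintegral_segment => x; [exact: cabs | exact: csabs | rewrite abs_le_sabs].
rewrite -Rintegral_segment_cst // -RintegralD_segment => [|//|x _]; last exact: cvg_cst.
apply: le_Rintegral_segment => x; first exact: csabs.
  by move=> rxR; apply: cvgD; [exact: cabs | exact: cvg_cst].
by move=> _; rewrite sabs_le_abs_add // ltW.
Qed.

Lemma Rintegral_abs_dif_le_eps r Rr s t : 0 < r -> r < Rr -> 0 < s -> s < t ->
  exists K, forall e, 0 < e ->
  \int[mu]_(x in `[r, Rr]) `|dif x t| + \int[mu]_(y in `[s, t]) ssg_flux e r y <=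
  \int[mu]_(x in `[r, Rr]) `|dif x s| + \int[mu]_(y in `[s, t]) ssg_flux e Rr y + e * K.
Proof.
move=> r0 rR s0 st.
have posx x : r <= x <= Rr -> 0 < x by case/andP => /(lt_le_trans r0).
have posy y : s <= y <= t -> 0 < y by case/andP => /(lt_le_trans s0).
have [Mbx bx_le] : exists M : R, forall x y, r <= x <= Rr -> s <= y <= t ->
    `|flux_coef_x x y| <= M.
  by apply: jcont_bounded => x y /posx x0 /posy y0; exact: jcont_flux_coef_x.
have [Mb b_le] : exists M : R, forall x y, r <= x <= Rr -> s <= y <= t ->
    `|flux_coef x y| <= M.
  by apply: jcont_bounded => x y /posx x0 /posy y0; exact: jcont_flux_coef.
set C := 2 * Mb + (Rr - r) * Mbx.
exists (Rr - r + C * (t - s)) => e e0.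
have time_le := Rintegral_sabs_dif_le e0 r0 rR s0 st bx_le b_le.
have [abs_le _] := andP (Rintegral_sabs_dif_bounds e0 r0 (ltW rR) (lt_trans s0 st)).
have [_ sabs_le] := andP (Rintegral_sabs_dif_bounds e0 r0 (ltW rR) s0).
have cfR y : s <= y <= t -> {for y, continuous (ssg_flux e Rr)}.
  by move/posy; apply: continuous_ssg_flux_t => //; exact: lt_trans rR.
have cfr y : s <= y <= t -> {for y, continuous (ssg_flux e r)}.
  by move/posy; exact: continuous_ssg_flux_t.
have flux_split : \int[mu]_(y in `[s, t]) (ssg_flux e Rr y - ssg_flux e r y + e * C) =
    \int[mu]_(y in `[s, t]) ssg_flux e Rr y - \int[mu]_(y in `[s, t]) ssg_flux e r y
    + e * C * (t - s).
  rewrite RintegralD_segment => [|y ys|y _]; last exact: cvg_cst.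
    rewrite RintegralB ?Rintegral_segment_cst //; first exact: ltW.
      exact: integrable_segment cfR.
    exact: integrable_segment cfr.
  by apply: cvgB; [exact: cfR | exact: cfr].
rewrite flux_split in time_le.
have -> : e * (Rr - r + C * (t - s)) = e * (Rr - r) + e * C * (t - s) by ring.
lra.
Qed.

Lemma cvg_Rintegral_ssg_flux (e_ : nat -> R) x s t :
  (forall k, 0 < e_ k) -> e_ @ \oo --> 0 -> 0 < x -> 0 < s ->
  mu.-integrable `[s, t] (EFin \o (fun y => Num.sg (dif x y) * dflux x y)) /\
  (fun k => \int[mu]_(y in `[s, t]) ssg_flux (e_ k) x y) @ \oo
    --> \int[mu]_(y in `[s, t]) (Num.sg (dif x y) * dflux x y).
Proof.
move=> e_gt0 e_0 x0 s0.
have posy y : s <= y <= t -> 0 < y by case/andP => /(lt_le_trans s0).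
pose f_ k := EFin \o ssg_flux (e_ k) x.
pose f := EFin \o (fun y => Num.sg (dif x y) * dflux x y).
pose g := EFin \o (fun y => `|dflux x y|).
pose D : set (measurableTypeR R) := [set` `[s, t]].
have mD : measurable D by exact: measurable_itv.
have if_ k : mu.-integrable `[s, t] (f_ k).
  by apply: integrable_segment => y /posy; exact: continuous_ssg_flux_t.
have mf_ k := measurable_int mu (if_ k).
have f_f y : D y -> f_ ^~ y @ \oo --> f y.
  move=> _; apply: cvg_EFin; first exact: nearW.
  by apply: cvgM; [exact: cvg_ssg_sg | exact: cvg_cst].
have mf := measurable_realfun.emeasurable_fun_cvg f_ f mf_ f_f.
have ig : mu.-integrable `[s, t] g.
  apply: integrable_segment => y /posy y0.
  exact: continuous_comp (jcont_continuous_t (jcont_dflux x0 y0))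
                         (@norm_continuous _ R^o _).
have f_g : {ae mu, forall y k, D y -> (`|f_ k y| <= g y)%E}.
  apply: aeW => y k _; rewrite /f_ /g /= lee_fin normrM.
  by rewrite -[leRHS]mul1r ler_pM // abs_ssg_le1.
have [intf _ lim] :=
  @dominated_convergence _ _ _ mu D mD f_ f g mf_ mf (aeW _ f_f) ig f_g.
split=> //; rewrite -(fineK (integrable_fin_num mD intf)) in lim.
exact: fine_cvg lim.
Qed.

End difference.

Lemma ler_cvg_vanishing (R : realType) (u v e_ : nat -> R) (a b K : R) :
  u @ \oo --> a -> v @ \oo --> b -> e_ @ \oo --> 0 ->
  (forall k, u k <= v k + e_ k * K) -> a <= b.
Proof.
move=> ua vb e_0 uv; rewrite -[b]addr0 -(mul0r K).
by apply: (ler_cvg_to ua (cvgD vb (cvgM e_0 (cvg_cst K)))); exact: nearW.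
Qed.

Theorem lemma3p2 (R : realType) (T : R) (n m : R -> R -> R)
  (n0 m0 : R -> R) :
  0 < T ->
  kompaneets_solution n0 n -> kompaneets_solution m0 m ->
  Linfty_QT T n -> Linfty_QT T m ->
  x ^+ 2 * n0 x @[x --> +oo] --> 0 ->
  x ^+ 2 * m0 x @[x --> +oo] --> 0 ->
  forall r Rr s t : R, 0 < r -> r < Rr -> 0 < s -> s < t -> t <= T ->
  ((\int[@lebesgue_measure R]_(x in `[r, Rr]) (`|n x t - m x t|)%:E)
   + (\int[@lebesgue_measure R]_(tau in `[s, t])
        (Num.sg (n r tau - m r tau) * (J n r tau - J m r tau))%:E)
   <=
   (\int[@lebesgue_measure R]_(x in `[r, Rr]) (`|n x s - m x s|)%:E)
   + (\int[@lebesgue_measure R]_(tau in `[s, t])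
        (Num.sg (n Rr tau - m Rr tau) * (J n Rr tau - J m Rr tau))%:E))%E.
Proof.
move=> _ [_ n_C21 _ _ [n_eq _]] [_ m_C21 _ _ [m_eq _]] _ _ _ _ r Rr s t r0 rR s0 st _.
have [K le_eps] := Rintegral_abs_dif_le_eps n_C21 m_C21 n_eq m_eq r0 rR s0 st.
have [int_r lim_r] := cvg_Rintegral_ssg_flux n_C21 m_C21 t harmonic_gt0 cvg_harmonic r0 s0.
have [int_R lim_R] :=
  cvg_Rintegral_ssg_flux n_C21 m_C21 t harmonic_gt0 cvg_harmonic (lt_trans r0 rR) s0.
have int_abs y : 0 < y ->
    (@lebesgue_measure R).-integrable `[r, Rr] (EFin \o (fun x => `|dif n m x y|)).
  move=> y0; apply: integrable_segment => x /andP[/(lt_le_trans r0) x0 _].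
  exact: continuous_abs_dif_x.
have int_t := int_abs t (lt_trans s0 st).
have int_s := int_abs s s0.
rewrite !EFin_Rintegral // -!EFinD lee_fin.
apply: (ler_cvg_vanishing _ _ cvg_harmonic (fun k => le_eps _ (harmonic_gt0 k)));
  by apply: cvgD => //; exact: cvg_cst.
Qed.
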